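(* Let $\mathcal{A}_l\subseteq\mathcal{A}$ be nonempty, $\alpha\in[0,1)$, and let $\pi^{(t)}\in\Delta(\mathcal{A}_l)$ be such that $(1-\alpha)V_{\pi^{(t)}}+\alpha V_{\pi_{\mathrm{off}}}$ is nonsingular. Let $\pi^{(t+1)}$ be obtained from $\pi^{(t)}$ by one Frank–Wolfe update as in the context. Then $$d(\pi^{(t+1)},\mathcal{A}_l,\alpha)-d(\pi^{(t)},\mathcal{A}_l,\alpha)\ge m(\delta(\pi^{(t)})),\qquad m(\delta):=\log(1+\delta)-\frac{\delta}{1+\delta}.$$
   Context: $\mathcal{A}\subset\mathbb{R}^d$ finite, spanning $\mathbb{R}^d$, with $d\ge2$; $\pi_{\mathrm{off}}\in\Delta(\mathcal{A})$; $V_\pi=\sum_a\pi(a)aa^\top$; $d(\pi,\mathcal{A}_l,\alpha)=\log\det(\alpha V_{\pi_{\mathrm{off}}}+(1-\alpha)V_\pi)$. For $\pi$ with $(1-\alpha)V_\pi+\alpha V_{\pi_{\mathrm{off}}}$ nonsingular let $H(\pi)=((1-\alpha)V_\pi+\alpha V_{\pi_{\mathrm{off}}})^{-1}$, $w_a=\mathrm{Tr}\big(H(\pi)((1-\alpha)aa^\top+\alpha V_{\pi_{\mathrm{off}}})\big)$ for $a\in\mathcal{A}_l$, $a_+\in\arg\max_{a\in\mathcal{A}_l}w_a$, and the slack $\delta(\pi)=\frac{w_{a_+}}{d}-1$. Frank–Wolfe update: with $w,a_+$ computed at $\pi^{(t)}$ and $\beta=\frac{w_{a_+}-d}{(d-1)w_{a_+}}$,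 $\pi^{(t+1)}=(1+\beta)^{-1}(\pi^{(t)}+\beta\mathbb{1}_{\{a_+\}})$. *)

From HB Require Import structures.
From mathcomp Require Import all_boot all_order all_algebra.
From mathcomp Require Import reals exp.
Set Implicit Arguments. Unset Strict Implicit. Unset Printing Implicit Defensive.
Import Order.TTheory GRing.Theory Num.Theory.
Local Open Scope ring_scope.

(* The finite action set A is encoded by a finite index type I and an
   injective map a : I -> 'cV[R]_d; distributions are functions I -> R. *)

Definition spans (R : realType) (d : nat) (I : finType) (a : I -> 'cV[R]_d) :=
  forall v : 'cV[R]_d, exists c : I -> R, v = \sum_i c i *: a i.

Definition is_distr_on (R : realType) (I : finType) (S : {set I}) (p : I -> R) :=
  (forall i, 0 <= p i) /\ (forall i, i \notin S -> p i = 0) /\ \sum_i p i = 1.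

Definition Vpi (R : realType) (d : nat) (I : finType) (a : I -> 'cV[R]_d)
  (p : I -> R) : 'M[R]_d := \sum_i p i *: (a i *m (a i)^T).

Definition Mmix (R : realType) (d : nat) (I : finType) (a : I -> 'cV[R]_d)
  (alpha : R) (poff p : I -> R) : 'M[R]_d :=
  alpha *: Vpi a poff + (1 - alpha) *: Vpi a p.

Definition dobj (R : realType) (d : nat) (I : finType) (a : I -> 'cV[R]_d)
  (alpha : R) (poff p : I -> R) : R := ln (\det (Mmix a alpha poff p)).

Definition wgt (R : realType) (d : nat) (I : finType) (a : I -> 'cV[R]_d)
  (alpha : R) (poff p : I -> R) (b : I) : R :=
  \tr (invmx (Mmix a alpha poff p) *m
       ((1 - alpha) *: (a b *m (a b)^T) + alpha *: Vpi a poff)).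

Definition slack (R : realType) (d : nat) (I : finType) (a : I -> 'cV[R]_d)
  (alpha : R) (poff p : I -> R) (aplus : I) : R :=
  wgt a alpha poff p aplus / d%:R - 1.

Definition fw_beta (R : realType) (d : nat) (I : finType) (a : I -> 'cV[R]_d)
  (alpha : R) (poff p : I -> R) (aplus : I) : R :=
  let w := wgt a alpha poff p aplus in (w - d%:R) / ((d%:R - 1) * w).

Definition fw_update (R : realType) (d : nat) (I : finType) (a : I -> 'cV[R]_d)
  (alpha : R) (poff p : I -> R) (aplus : I) : I -> R :=
  let beta := fw_beta a alpha poff p aplus in
  fun i => (p i + beta * (i == aplus)%:R) / (1 + beta).

Definition mfun (R : realType) (x : R) : R := ln (1 + x) - x / (1 + x).

From HB Require Import structures.
From mathcomp Require Import all_boot all_order all_algebra.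
From mathcomp Require Import reals exp.
From mathcomp Require Import ring lra.
Import Order.TTheory GRing.Theory Num.Theory.
Local Open Scope ring_scope.

(* Write M(q) = alpha V_off + (1 - alpha) V_q, so that M is affine in q and
   w_b = Tr(M(pi)^-1 M(1_b)).  Averaging over pi gives sum_b pi(b) w_b =
   Tr(M(pi)^-1 M(pi)) = d, hence w_{a+} >= d and beta >= 0.  The update satisfies
   (1 + beta) M(pi') = M(pi) + beta M(1_{a+}), a nonnegative combination of rank-one
   matrices a a^T added to M(pi).  For a positive definite X, the map
   u |-> det X * u^T X^-1 u (the adjugate form) only grows under positive
   semidefinite rank-one updates (Sherman-Morrison plus Cauchy-Schwarz); with the
   matrix determinant lemma this gives det (X + S) >= det X * (1 + Tr(X^-1 S)) for
   every such sum S.  Hence (1 + beta)^d det M(pi') >= det M(pi) (1 + beta w_{a+}),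
   and since 1 + beta w_{a+} = (w_{a+}/d)(1 + beta) and ln(1 + beta) <= beta,
   the log-determinant gains at least ln(w_{a+}/d) - (d - 1) beta = m(delta). *)

Set Implicit Arguments.
Unset Strict Implicit.
Unset Printing Implicit Defensive.

Lemma det1D_rank1 (R : comPzRingType) n (u w : 'cV[R]_n) :
  \det (1%:M + u *m w^T) = 1 + (w^T *m u) 0 0.
Proof.
pose P := block_mx (1%:M : 'M[R]_n) (- u) w^T (1%:M : 'M_1).
have lower_upper : block_mx 1%:M 0 w^T 1%:M *m block_mx 1%:M (- u) 0 (1%:M + w^T *m u) = P.
  by rewrite mulmx_block /P !mul1mx !mulmx1 !mul0mx !addr0 mulmxN addrCA addNr addr0.
have upper_lower : block_mx (1%:M + u *m w^T) (- u) 0 1%:M *m block_mx 1%:M 0 w^T 1%:M = P.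
  by rewrite mulmx_block /P !mul1mx !mulmx1 !mul0mx !mulmx0 ?addr0 ?add0r mulNmx addrK.
have := congr1 determinant lower_upper.
rewrite -upper_lower !det_mulmx !det_ublock !det_lblock !det1 !mul1r !mulr1 => <-.
by rewrite det_mx11 !mxE eqxx.
Qed.

Lemma horner_char_poly (R : comNzRingType) n (A : 'M[R]_n) t :
  (char_poly A).[t] = \det (t%:M - A).
Proof.
rewrite /char_poly -[LHS]/(horner_eval t _) -det_map_mx; congr (\det _).
apply/matrixP => i j; rewrite !mxE /horner_eval.
by case: (i == j); rewrite ?mulr1n ?mulr0n /= ?rmorphB /= ?horner_evalE ?hornerE ?rmorph0.
Qed.

Section PsdMatrices.
Variables (R : realFieldType) (n : nat).
Implicit Types (G X : 'M[R]_n) (u v x y z : 'cV[R]_n) (c t : R).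

Definition mxform G x y : R := (x^T *m G *m y) 0 0.
Definition psdmx G := G^T = G /\ forall x, 0 <= mxform G x x.

Lemma mxformDl G x y z : mxform G (x + y) z = mxform G x z + mxform G y z.
Proof. by rewrite /mxform linearD /= !mulmxDl mxE. Qed.

Lemma mxformZl G t x y : mxform G (t *: x) y = t * mxform G x y.
Proof. by rewrite /mxform linearZ /= -!scalemxAl mxE. Qed.

Lemma mxformDr G x y z : mxform G x (y + z) = mxform G x y + mxform G x z.
Proof. by rewrite /mxform mulmxDr mxE. Qed.

Lemma mxformZr G t x y : mxform G x (t *: y) = t * mxform G x y.
Proof. by rewrite /mxform -scalemxAr mxE. Qed.

Lemma mxformD G X x y : mxform (G + X) x y = mxform G x y + mxform X x y.
Proof. by rewrite /mxform mulmxDr mulmxDl mxE. Qed.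

Lemma mxformZ G t x y : mxform (t *: G) x y = t * mxform G x y.
Proof. by rewrite /mxform -scalemxAr -scalemxAl mxE. Qed.

Lemma mxformC G x y : G^T = G -> mxform G x y = mxform G y x.
Proof.
move=> symG; rewrite /mxform -[in LHS](trmxK (x^T *m G *m y)) mxE.
by rewrite !trmx_mul trmxK symG mulmxA.
Qed.

Lemma mxform_rank1 v x y : mxform (v *m v^T) x y = (v^T *m x) 0 0 * (v^T *m y) 0 0.
Proof.
have -> : (v^T *m x) 0 0 = (x^T *m v) 0 0.
  by rewrite -[in LHS](trmxK (v^T *m x)) mxE trmx_mul trmxK.
by rewrite /mxform mulmxA -(mulmxA _ v^T) {1}[x^T *m v]mx11_scalar mul_scalar_mx mxE.
Qed.

Lemma mxtrace_mul_rank1 G v : \tr (G *m (v *m v^T)) = mxform G v v.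
Proof. by rewrite mulmxA mxtrace_mulC /mxtrace big_ord1 /mxform mulmxA. Qed.

Lemma psdmx_cauchy_schwarz G x y :
  psdmx G -> mxform G x y ^+ 2 <= mxform G x x * mxform G y y.
Proof.
move=> [symG posG].
set q := mxform G x x; set b := mxform G x y; set r := mxform G y y.
have quad t : 0 <= q + 2 * t * b + t ^+ 2 * r.
  have := posG (x + t *: y).
  by rewrite mxformDl !mxformDr !mxformZl !mxformZr (mxformC y x) // -/q -/b -/r; lra.
have [r_gt0|r_le0] := ltP 0 r.
  have := quad (- b / r).
  have -> : q + 2 * (- b / r) * b + (- b / r) ^+ 2 * r = (q * r - b ^+ 2) / r.
    by field; rewrite gt_eqF.
  by rewrite pmulr_lge0 ?invr_gt0 // subr_ge0.
have r0 : r = 0 by apply/le_anti; rewrite r_le0 posG.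
rewrite r0 mulr0; have [->|b_neq0] := eqVneq b 0; first by rewrite expr0n.
have := quad (- (q + 1) / (2 * b)).
have -> : q + 2 * (- (q + 1) / (2 * b)) * b + (- (q + 1) / (2 * b)) ^+ 2 * r = -1.
  by rewrite r0 mulr0 addr0; field.
by rewrite ler0N1.
Qed.

Lemma psdmx0 : psdmx 0.
Proof. by split=> [|x]; rewrite ?trmx0 // /mxform mulmx0 mul0mx mxE. Qed.

Lemma psdmxD G X : psdmx G -> psdmx X -> psdmx (G + X).
Proof.
move=> [symG posG] [symX posX]; split; first by rewrite linearD /= symG symX.
by move=> x; rewrite mxformD addr_ge0.
Qed.

Lemma psdmxZ t G : 0 <= t -> psdmx G -> psdmx (t *: G).
Proof.
move=> t_ge0 [symG posG]; split; first by rewrite linearZ /= symG.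
by move=> x; rewrite mxformZ mulr_ge0.
Qed.

Lemma psdmx_rank1 v : psdmx (v *m v^T).
Proof.
split=> [|x]; first by rewrite trmx_mul trmxK.
by rewrite mxform_rank1 -expr2 sqr_ge0.
Qed.

Lemma psdmx_scalar t : 0 <= t -> psdmx t%:M.
Proof.
move=> t_ge0; split=> [|x]; first by rewrite tr_scalar_mx.
rewrite /mxform mul_mx_scalar -scalemxAl mxE mulr_ge0 // mxE sumr_ge0 // => i _.
by rewrite mxE -expr2 sqr_ge0.
Qed.

(* For a singular [G], [invmx G] is [G] itself. *)
Lemma psdmx_inv G : psdmx G -> psdmx (invmx G).
Proof.
move=> psdG; have [unitG|/invmx_out -> //] := boolP (G \in unitmx).
case: psdG => symG posG; split=> [|x]; first by rewrite trmx_inv symG.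
have := posG (invmx G *m x).
rewrite /mxform trmx_mul trmx_inv symG -!mulmxA (mulmxA G) mulmxV // mul1mx.
by rewrite mulmxA.
Qed.

Section RankOneSums.
Variables (J : Type) (r : seq J) (c : J -> R) (v : J -> 'cV[R]_n).
Hypothesis c_ge0 : forall j, 0 <= c j.

Lemma psdmx_sum_rank1 : psdmx (\sum_(j <- r) c j *: (v j *m (v j)^T)).
Proof.
elim/big_ind: _ => [|G X|j _]; [exact: psdmx0 | exact: psdmxD |].
exact/psdmxZ/psdmx_rank1.
Qed.

Lemma mxtrace_mul_sum_rank1 G :
  \tr (G *m \sum_(j <- r) c j *: (v j *m (v j)^T)) = \sum_(j <- r) c j * mxform G (v j) (v j).
Proof.
rewrite mulmx_sumr raddf_sum /=; apply: eq_bigr => j _.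
by rewrite -scalemxAr mxtraceZ mxtrace_mul_rank1.
Qed.

Lemma mxtrace_mul_sum_rank1_ge0 G : psdmx G -> 0 <= \tr (G *m \sum_(j <- r) c j *: (v j *m (v j)^T)).
Proof.
move=> [_ posG]; rewrite mxtrace_mul_sum_rank1 sumr_ge0 // => j _.
exact: mulr_ge0.
Qed.

End RankOneSums.

Lemma det_add_rank1 X c v : X \in unitmx ->
  \det (X + c *: (v *m v^T)) = \det X * (1 + c * mxform (invmx X) v v).
Proof.
move=> unitX.
have -> : X + c *: (v *m v^T) = X *m (1%:M + (c *: (invmx X *m v)) *m v^T).
  by rewrite mulmxDr mulmx1 -!scalemxAl -scalemxAr !mulmxA mulmxV // mul1mx.
by rewrite det_mulmx det1D_rank1 -scalemxAr mxE /mxform mulmxA.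
Qed.

Lemma invmx_add_rank1 X c v (k := mxform (invmx X) v v) :
  X \in unitmx -> 1 + c * k != 0 ->
  invmx (X + c *: (v *m v^T)) =
    invmx X - (c / (1 + c * k)) *: (invmx X *m v *m v^T *m invmx X).
Proof.
move=> unitX k_neq0; set G := invmx X; set e := c / (1 + c * k).
set Y := G - e *: (G *m v *m v^T *m G).
have XG : X *m G = 1%:M by rewrite mulmxV.
have unitX' : X + c *: (v *m v^T) \in unitmx.
  by rewrite unitmxE det_add_rank1 // unitrM -unitmxE unitX unitfE.
have XGvvG : X *m (G *m v *m v^T *m G) = v *m v^T *m G by rewrite !mulmxA XG mul1mx.
have vvGvvG : v *m v^T *m (G *m v *m v^T *m G) = k *: (v *m v^T *m G).
  have vvGv : v *m v^T *m G *m v = k *: v.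
    by rewrite -!mulmxA (mulmxA v^T) [v^T *m G *m v]mx11_scalar mul_mx_scalar.
  by rewrite !mulmxA vvGv -!scalemxAl.
have X'Y : (X + c *: (v *m v^T)) *m Y = 1%:M.
  rewrite /Y mulmxDl !mulmxBr -!scalemxAr -!scalemxAl XG XGvvG vvGvvG !scalerA -scalerBl.
  have -> : c - e * c * k = e by rewrite /e; field.
  by rewrite subrK.
by rewrite -[RHS](mulKmx unitX' Y) X'Y mulmx1.
Qed.

Lemma det_mxform_invmx_le_add_rank1 X c v u :
  psdmx X -> X \in unitmx -> 0 <= c -> 0 <= \det X ->
  \det X * mxform (invmx X) u u <=
  \det (X + c *: (v *m v^T)) * mxform (invmx (X + c *: (v *m v^T))) u u.
Proof.
move=> psdX unitX c_ge0 detX_ge0; have psdG := psdmx_inv psdX.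
have [symG posG] := psdG; set G := invmx X in psdG symG posG *.
set k := mxform G v v; have k_gt0 : 0 < 1 + c * k by rewrite ltr_pwDl ?mulr_ge0 ?posG.
rewrite det_add_rank1 // invmx_add_rank1 ?gt_eqF // -/G -/k.
have -> : G *m v *m v^T *m G = (G *m v) *m (G *m v)^T by rewrite trmx_mul symG !mulmxA.
rewrite mxformD -scaleNr mxformZ mxform_rank1.
have -> : ((G *m v)^T *m u) 0 0 = mxform G u v by rewrite trmx_mul symG; apply: mxformC.
have := psdmx_cauchy_schwarz u v psdG; rewrite -/k.
set b := mxform G u v; set q := mxform G u u => cauchy_schwarz.
have -> : \det X * (1 + c * k) * (q + - (c / (1 + c * k)) * (b * b)) =
          \det X * (q + c * (q * k - b ^+ 2)) by field; rewrite gt_eqF.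
by rewrite ler_wpM2l // lerDl mulr_ge0 // subr_ge0.
Qed.

Lemma det_add_sum_rank1_ge X (J : Type) (r : seq J) (c : J -> R) (v : J -> 'cV[R]_n) :
  psdmx X -> 0 < \det X -> (forall j, 0 <= c j) ->
  \det X * (1 + \tr (invmx X *m \sum_(j <- r) c j *: (v j *m (v j)^T))) <=
  \det (X + \sum_(j <- r) c j *: (v j *m (v j)^T)).
Proof.
move=> + + c_ge0; elim: r X => [|j r IH] X psdX detX_gt0.
  by rewrite !big_nil mulmx0 mxtrace0 addr0 mulr1 addr0.
set X' := X + c j *: (v j *m (v j)^T).
have unitX : X \in unitmx by rewrite unitmxE unitfE gt_eqF.
have [_ posG] := psdmx_inv psdX.
have detX' : \det X' = \det X * (1 + c j * mxform (invmx X) (v j) (v j)).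
  exact: det_add_rank1.
have detX'_gt0 : 0 < \det X' by rewrite detX' mulr_gt0 // ltr_pwDl // mulr_ge0.
have psdX' : psdmx X' by apply: psdmxD => //; apply: psdmxZ => //; apply: psdmx_rank1.
have := IH X' psdX' detX'_gt0; rewrite big_cons addrA -/X'; apply: le_trans.
rewrite mulmxDr mxtraceD -scalemxAr mxtraceZ mxtrace_mul_rank1 !mxtrace_mul_sum_rank1 //.
rewrite addrA mulrDr [leRHS]mulrDr mulr1 -detX'.
rewrite lerD2l !big_distrr ler_sum //= => i _.
rewrite mulrCA [leRHS]mulrCA ler_wpM2l //.
exact: det_mxform_invmx_le_add_rank1 (ltW _).
Qed.

End PsdMatrices.

Lemma det_sum_rank1_gt0 (R : rcfType) n (J : Type) (r : seq J) (c : J -> R)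
    (v : J -> 'cV[R]_n) (S := \sum_(j <- r) c j *: (v j *m (v j)^T)) :
  (forall j, 0 <= c j) -> S \in unitmx -> 0 < \det S.
Proof.
move=> c_ge0 unitS.
have det_shift_gt0 t : 0 < t -> 0 < \det (t%:M + S).
  move=> t_gt0; have psd_t := psdmx_scalar n (ltW t_gt0).
  have det_t : 0 < \det (t%:M : 'M[R]_n) by rewrite det_scalar exprn_gt0.
  apply: lt_le_trans (det_add_sum_rank1_ge r v psd_t det_t c_ge0).
  by rewrite mulr_gt0 // ltr_pwDl // mxtrace_mul_sum_rank1_ge0 //; exact: psdmx_inv.
(* [p t = det (t + S)] is positive for [t > 0] and nonzero at [0], so by the
   intermediate value theorem it cannot be negative at [0]. *)
pose p := char_poly (- S).
have p_eval t : p.[t] = \det (t%:M + S) by rewrite horner_char_poly opprK.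
have detS_neq0 : \det S != 0 by rewrite -unitfE -unitmxE.
have [//|detS_le0] := ltP 0 (\det S).
have [x /andP[x_ge0 _]] : exists2 x, 0 <= x <= 1 & root p x.
  apply: poly_ivt; first exact: ler01.
  by rewrite !p_eval raddf0 add0r detS_le0 ltW // det_shift_gt0.
rewrite /root p_eval; have [->|x_neq0] := eqVneq x 0.
  by rewrite raddf0 add0r (negbTE detS_neq0).
by rewrite gt_eqF // det_shift_gt0 // lt_def x_neq0.
Qed.

Definition dirac (R : pzSemiRingType) (I : eqType) (b i : I) : R := (i == b)%:R.

Section FrankWolfeStep.
Variables (R : realType) (d : nat) (I : finType) (a : I -> 'cV[R]_d).
Variables (alpha : R) (poff : I -> R).

Lemma Mmix_sum q :
  Mmix a alpha poff q = \sum_i (alpha * poff i + (1 - alpha) * q i) *: (a i *m (a i)^T).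
Proof.
rewrite /Mmix /Vpi !scaler_sumr -big_split; apply: eq_bigr => i _.
by rewrite !scalerA scalerDl.
Qed.

Lemma Vpi_dirac b : Vpi a (dirac R b) = a b *m (a b)^T.
Proof.
rewrite /Vpi (bigD1 b) //= /dirac eqxx scale1r big1 ?addr0 // => i /negbTE ->.
by rewrite scale0r.
Qed.

Lemma wgtE p b :
  wgt a alpha poff p b = \tr (invmx (Mmix a alpha poff p) *m Mmix a alpha poff (dirac R b)).
Proof. by rewrite /wgt; congr (\tr (_ *m _)); rewrite /Mmix Vpi_dirac addrC. Qed.

Lemma Mmix_convex p :
  \sum_i p i = 1 -> \sum_i p i *: Mmix a alpha poff (dirac R i) = Mmix a alpha poff p.
Proof.
move=> p_sum1; rewrite /Mmix; under eq_bigr => i _ do rewrite Vpi_dirac scalerDr.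
rewrite big_split /= -scaler_suml p_sum1 scale1r; congr (_ + _).
by rewrite /Vpi scaler_sumr; apply: eq_bigr => i _; rewrite !scalerA mulrC.
Qed.

Lemma sum_wgt p : Mmix a alpha poff p \in unitmx -> \sum_i p i = 1 ->
  \sum_i p i * wgt a alpha poff p i = d%:R.
Proof.
move=> unitM p_sum1; under eq_bigr => i _ do rewrite wgtE -mxtraceZ scalemxAr.
by rewrite -raddf_sum /= -mulmx_sumr Mmix_convex // mulVmx // mxtrace1.
Qed.

Lemma dim_le_wgt_max Al p b : is_distr_on Al p -> Mmix a alpha poff p \in unitmx ->
  (forall i, i \in Al -> wgt a alpha poff p i <= wgt a alpha poff p b) ->
  d%:R <= wgt a alpha poff p b.
Proof.
move=> [p_ge0 [p_out p_sum1]] unitM wgt_max.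
rewrite -(sum_wgt unitM p_sum1) -[leRHS]mul1r -p_sum1 mulr_suml ler_sum // => i _.
have [iAl|iAl] := boolP (i \in Al); first by rewrite ler_wpM2l // wgt_max.
by rewrite p_out // !mul0r.
Qed.

Lemma Mmix_fw_update p b (beta := fw_beta a alpha poff p b) : 1 + beta != 0 ->
  (1 + beta) *: Mmix a alpha poff (fw_update a alpha poff p b) =
  Mmix a alpha poff p + beta *: Mmix a alpha poff (dirac R b).
Proof.
move=> beta_neq0; rewrite !Mmix_sum !scaler_sumr -big_split /=; apply: eq_bigr => i _.
by rewrite !scalerA -scalerDl /fw_update -/beta /dirac; congr (_ *: _); field.
Qed.

End FrankWolfeStep.

Lemma fw_step_ge0 (R : realFieldType) (n : nat) (w : R) :
  (1 < n)%N -> n%:R <= w -> 0 <= (w - n%:R) / ((n%:R - 1) * w).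
Proof.
move=> n_gt1 n_le_w; have n_gt1R : 1 < n%:R :> R by rewrite ltr1n.
have w_gt0 : 0 < w by apply: lt_le_trans n_le_w; apply: lt_trans n_gt1R.
by rewrite divr_ge0 ?mulr_ge0 ?subr_ge0 ?(ltW n_gt1R) ?(ltW w_gt0).
Qed.

Lemma fw_log_gain (R : realType) (n : nat) (w beta x y : R) :
  (2 <= n)%N -> n%:R <= w -> beta = (w - n%:R) / ((n%:R - 1) * w) -> 0 < x ->
  x * (1 + beta * w) <= (1 + beta) ^+ n * y -> mfun (w / n%:R - 1) <= ln y - ln x.
Proof.
move=> n_ge2 n_le_w beta_def x_gt0 gain.
have n_gt1 : 1 < n%:R :> R by rewrite ltr1n.
have n_gt0 : 0 < n%:R :> R by apply: lt_trans n_gt1.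
have w_gt0 : 0 < w by apply: lt_le_trans n_le_w.
have beta_ge0 : 0 <= beta by rewrite beta_def fw_step_ge0.
have beta1_gt0 : 0 < 1 + beta by rewrite ltr_pwDl.
have ratio_gt0 : 0 < w / n%:R by rewrite divr_gt0.
have -> : mfun (w / n%:R - 1) = ln (w / n%:R) - (n%:R - 1) * beta.
  rewrite /mfun [1 + _]addrC subrK beta_def; congr (_ - _).
  by field; rewrite !gt_eqF // subr_gt0.
have {}gain : x * (w / n%:R * (1 + beta)) <= (1 + beta) ^+ n * y.
  suff <- : 1 + beta * w = w / n%:R * (1 + beta) by [].
  by rewrite beta_def; field; rewrite !gt_eqF // subr_gt0.
have pow_gt0 : 0 < (1 + beta) ^+ n by rewrite exprn_gt0.
have step_gt0 : 0 < w / n%:R * (1 + beta) by rewrite mulr_gt0.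
have y_gt0 : 0 < y.
  by move: (lt_le_trans (mulr_gt0 x_gt0 step_gt0) gain); rewrite pmulr_rgt0.
have : ln (x * (w / n%:R * (1 + beta))) <= ln ((1 + beta) ^+ n * y).
  by rewrite ler_ln ?posrE ?(mulr_gt0 x_gt0 step_gt0) // mulr_gt0.
rewrite (lnM x_gt0 step_gt0) (lnM ratio_gt0 beta1_gt0) (lnM pow_gt0 y_gt0) lnXn //.
rewrite -mulr_natr.
have ln_le : ln (1 + beta) <= beta.
  by apply: le_ln1Dx; rewrite (lt_le_trans _ beta_ge0) // ltrN10.
have : (n%:R - 1) * ln (1 + beta) <= (n%:R - 1) * beta.
  by apply: ler_wpM2l; rewrite // subr_ge0 ltW.
nra.
Qed.

Theorem lemma5p4 (R : realType) (d : nat) (I : finType) (a : I -> 'cV[R]_d)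
  (poff : I -> R) (Al : {set I}) (alpha : R) (p : I -> R) (aplus : I) :
  (2 <= d)%N ->
  injective a ->
  spans a ->
  is_distr_on [set: I] poff ->
  Al != set0 ->
  0 <= alpha -> alpha < 1 ->
  is_distr_on Al p ->
  Mmix a alpha poff p \in unitmx ->
  aplus \in Al ->
  (forall b, b \in Al -> wgt a alpha poff p b <= wgt a alpha poff p aplus) ->
  dobj a alpha poff (fw_update a alpha poff p aplus) - dobj a alpha poff p
    >= mfun (slack a alpha poff p aplus).
Proof.
move=> d_ge2 _ _ [poff_ge0 _] _ alpha_ge0 alpha_lt1 p_distr unitM _ wgt_max.
have [p_ge0 _] := p_distr.
set M := Mmix a alpha poff p; set w := wgt a alpha poff p aplus.
set beta := fw_beta a alpha poff p aplus.
have d_le_w : d%:R <= w := dim_le_wgt_max p_distr unitM wgt_max.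
have beta_ge0 : 0 <= beta := fw_step_ge0 d_ge2 d_le_w.
have mix_ge0 q : (forall i, 0 <= q i) -> forall i, 0 <= alpha * poff i + (1 - alpha) * q i.
  by move=> q_ge0 i; rewrite addr_ge0 ?mulr_ge0 // subr_ge0 ltW.
have psdM : psdmx M by rewrite /M Mmix_sum; apply/psdmx_sum_rank1/mix_ge0.
have detM_gt0 : 0 < \det M by rewrite /M Mmix_sum det_sum_rank1_gt0 -?Mmix_sum //; apply: mix_ge0.
have gain : \det M * (1 + beta * w) <=
            (1 + beta) ^+ d * \det (Mmix a alpha poff (fw_update a alpha poff p aplus)).
  rewrite -detZ Mmix_fw_update ?gt_eqF ?ltr_pwDl // -/M.
  rewrite /w wgtE -/M -mxtraceZ scalemxAr Mmix_sum scaler_sumr.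
  under eq_bigr do rewrite scalerA.
  apply: det_add_sum_rank1_ge => // i; rewrite mulr_ge0 //; apply: mix_ge0 => j.
  exact: ler0n.
exact: fw_log_gain d_ge2 d_le_w erefl detM_gt0 gain.
Qed.
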